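(* Let $\mathbf{v}_1,\mathbf{r}_u,\mathbf{r}_v\in\mathbb{R}^3$ with $\mathbf{r}_u,\mathbf{r}_v$ linearly independent, let $\mathbf{n}=\mathbf{r}_u\times\mathbf{r}_v/|\mathbf{r}_u\times\mathbf{r}_v|$, and let $\mathbf{r}_q(u,v)=\mathbf{r}_u u+\mathbf{r}_v v+\mathbf{v}_1$. Let $A$ be the $3\times3$ matrix with columns $\mathbf{r}_u,\mathbf{r}_v,\mathbf{n}$ (so that $\mathbf{r}_q(u,v)=A(u,v,0)^T+\mathbf{v}_1$), let $a_{s,t}$ denote the $(s,t)$ entry of $A^{-1}$, $\mathbf{a}_s$ the $s$-th row of $A^{-1}$, $\alpha_s^{(\pm)}=a_{s,1}\pm i\,a_{s,2}$ and $\beta_s=\mathbf{a}_s\cdot\mathbf{v}_1$. For a vector $\mathbf{w}=(w_x,w_y,w_z)^T$ write $\xi(\mathbf{w})=(w_x+iw_y)/2$, $\eta(\mathbf{w})=(w_x-iw_y)/2$, and set $\xi_0=\xi(\mathbf{v}_1)$, $\xi_v=\xi(\mathbf{r}_v)$, $\eta_0=\eta(\mathbf{v}_1)$, $\eta_v=\eta(\mathbf{r}_v)$, $z_0=v_{1,z}$, $z_v=r_{v,z}$ (the $z$-components of $\mathbf{v}_1$ and $\mathbf{r}_v$). For integers $n$, $m$, $b$, $c$ define $$Q_{n,b}^{m,c}(u,v)=R_n^m(\mathbf{r}_q(u,v))\,u^b v^c,\qquad j_{n,b}^{m,c}=\int_0^1 Q_{n,b}^{m,c}(u,1-u)\,du,\qquad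 q_{n,b}^{m,c}=Q_{n,b}^{m,c}(1,0),$$ with the convention that $j_{n,b}^{m,c}$ and $q_{n,b}^{m,c}$ are zero whenever $n<0$ or $|m|>n$ (terms whose index $b$ or $c$ is negative appear only multiplied by $b=0$ or $c=0$ and are then taken as zero). Then for all integers $n\ge0$, $|m|\le n$, $b\ge0$, $c\ge0$, $$\begin{aligned} (n+b+c+1)\,j_{n,b}^{m,c}=\;&(\xi_0+\xi_v)\big(i\,j_{n-1,b}^{m-1,c}+b\,\alpha_1^{(-)} j_{n,b-1}^{m,c}+c\,\alpha_2^{(-)} j_{n,b}^{m,c-1}\big)\\ &+(\eta_0+\eta_v)\big(i\,j_{n-1,b}^{m+1,c}+b\,\alpha_1^{(+)} j_{n,b-1}^{m,c}+c\,\alpha_2^{(+)} j_{n,b}^{m,c-1}\big)\\ &+(z_0+z_v)\big(-j_{n-1,b}^{m,c}+b\,a_{13}\, j_{n,b-1}^{m,c}+c\,a_{23}\, j_{n,b}^{m,c-1}\big)\\ &-b\,\beta_1\, j_{n,b-1}^{m,c}-c\,\beta_2\, j_{n,b}^{m,c-1}+q_{n,b}^{m,c}. \end{aligned}$$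
   Context: The regular solid harmonics are defined for $n=0,1,2,\dots$, $m=-n,\dots,n$ by $$R_n^m(\mathbf{r})=\frac{(-1)^n i^{|m|}}{(n+|m|)!}\,r^n P_n^{|m|}(\cos\theta)\,e^{im\varphi},$$ where $(r,\theta,\varphi)$ are the spherical coordinates of $\mathbf{r}=(x,y,z)^T=r(\sin\theta\cos\varphi,\sin\theta\sin\varphi,\cos\theta)^T$, and for $m\ge 0$, $P_n^m(\mu)=\frac{(-1)^m(1-\mu^2)^{m/2}}{2^n n!}\frac{d^{m+n}}{d\mu^{m+n}}(\mu^2-1)^n$ are the associated Legendre functions. $R_n^m$ is taken to be $0$ when $|m|>n$ or $n<0$. *)

From Stdlib Require Import Reals ZArith.
From Coquelicot Require Import Coquelicot.

Open Scope R_scope.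

Record vec3 := V3 { vx : R; vy : R; vz : R }.

Definition vadd (a b : vec3) : vec3 := V3 (vx a + vx b) (vy a + vy b) (vz a + vz b).
Definition vscal (k : R) (a : vec3) : vec3 := V3 (k * vx a) (k * vy a) (k * vz a).
Definition vdot (a b : vec3) : R := vx a * vx b + vy a * vy b + vz a * vz b.
Definition vnorm (a : vec3) : R := sqrt (vdot a a).
Definition vcross (a b : vec3) : vec3 :=
  V3 (vy a * vz b - vz a * vy b) (vz a * vx b - vx a * vz b) (vx a * vy b - vy a * vx b).
Definition vzero : vec3 := V3 0 0 0.

Definition vcomp (a : vec3) (t : nat) : R :=
  match t with 1%nat => vx a | 2%nat => vy a | _ => vz a end.

Definition lin_indep2 (a b : vec3) : Prop :=
  forall k l : R, vadd (vscal k a) (vscal l b) = vzero -> k = 0 /\ l = 0.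

Definition nvec (ru rv : vec3) : vec3 := vscal (/ vnorm (vcross ru rv)) (vcross ru rv).

Definition Amat (ru rv : vec3) (s t : nat) : R :=
  match t with
  | 1%nat => vcomp ru s
  | 2%nat => vcomp rv s
  | _ => vcomp (nvec ru rv) s
  end.

Definition delta (s t : nat) : R := if Nat.eqb s t then 1 else 0.

Definition is_inverse3 (M B : nat -> nat -> R) : Prop :=
  forall s t : nat, (1 <= s <= 3)%nat -> (1 <= t <= 3)%nat ->
    B s 1%nat * M 1%nat t + B s 2%nat * M 2%nat t + B s 3%nat * M 3%nat t = delta s t /\
    M s 1%nat * B 1%nat t + M s 2%nat * B 2%nat t + M s 3%nat * B 3%nat t = delta s t.

Definition legendreP (n m : nat) (mu : R) : R :=
  (-1) ^ m * (sqrt (1 - mu ^ 2)) ^ m / (2 ^ n * INR (fact n))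
  * Derive_n (fun t => (t ^ 2 - 1) ^ n) (m + n) mu.

(* e^{i phi} for the azimuthal angle phi of w: (cos phi, sin phi) = (x, y)/rho;
   on the z-axis (rho = 0) phi is arbitrary and we take phi = 0. *)
Definition eiphi (w : vec3) : C :=
  let rho := sqrt (vx w ^ 2 + vy w ^ 2) in
  if Req_EM_T rho 0 then RtoC 1 else (vx w / rho, vy w / rho).

Definition eimphi (m : Z) (w : vec3) : C :=
  if Z.leb 0 m then Cpow (eiphi w) (Z.abs_nat m)
  else Cpow (Cconj (eiphi w)) (Z.abs_nat m).

Definition solidR (n m : Z) (w : vec3) : C :=
  if orb (Z.ltb n 0) (Z.ltb n (Z.abs m)) then RtoC 0 else
  let nn := Z.to_nat n in
  let am := Z.abs_nat m in
  let r := vnorm w in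
  Cmult (Cmult (Cmult (RtoC ((-1) ^ nn)) (Cpow Ci am))
               (RtoC (/ INR (fact (nn + am)) * r ^ nn * legendreP nn am (vz w / r))))
        (eimphi m w).

Definition rq (v1 ru rv : vec3) (u v : R) : vec3 :=
  vadd (vadd (vscal u ru) (vscal v rv)) v1.

Definition Qf (v1 ru rv : vec3) (n m : Z) (b c : nat) (u v : R) : C :=
  Cmult (solidR n m (rq v1 ru rv u v)) (RtoC (u ^ b * v ^ c)).

(* j_{n,b}^{m,c} = int_0^1 Q(u, 1-u) du  (zero if n<0 or |m|>n since R is) *)
Definition jint (v1 ru rv : vec3) (n m : Z) (b c : nat) : C :=
  RInt (V := C_R_CompleteNormedModule) (fun u => Qf v1 ru rv n m b c u (1 - u)) 0 1.

Definition qval (v1 ru rv : vec3) (n m : Z) (b c : nat) : C :=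
  Qf v1 ru rv n m b c 1 0.

Definition xi (w : vec3) : C := (vx w / 2, vy w / 2).
Definition eta (w : vec3) : C := (vx w / 2, - vy w / 2).

Definition alphaP (Ainv : nat -> nat -> R) (s : nat) : C := (Ainv s 1%nat, Ainv s 2%nat).
Definition alphaM (Ainv : nat -> nat -> R) (s : nat) : C := (Ainv s 1%nat, - Ainv s 2%nat).
Definition beta (Ainv : nat -> nat -> R) (v1 : vec3) (s : nat) : R :=
  Ainv s 1%nat * vx v1 + Ainv s 2%nat * vy v1 + Ainv s 3%nat * vz v1.

(* The regular solid harmonics satisfy the ladder recurrence
     n R_n^m(w) = i xi(w) R_{n-1}^{m-1}(w) + i eta(w) R_{n-1}^{m+1}(w) - w_z R_{n-1}^m(w),
   a consequence of two recurrences of the derivatives of (t^2 - 1)^n (Rodrigues' formula).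
   Its right-hand side is linear in w, so along a line w = p + t d the derivative of
   R_n^m(w) is the same expression with w replaced by d.  Integrating the derivative of
   u^(b+1) (1-u)^c R_n^m(r_q(u, 1-u)) over [0, 1] and eliminating the directional derivative
   with the recurrence at r_q(u, 1-u) = (v_1 + r_v) + u (r_u - r_v) yields
     (n+b+c+1) j_{n,b}^{m,c} = c j_{n,b}^{m,c-1} + (the ladder expression at v_1 + r_v
                               applied to j_{n-1,b}^{.,c}) + q_{n,b}^{m,c}.
   This is the stated recurrence, because a_s . (v_1 + r_v) - beta_s = a_s . r_v, which is
   0 for s = 1 and 1 for s = 2 since r_v is the second column of A. *)

From Stdlib Require Import Reals ZArith Lia Lra FunctionalExtensionality.
From Coquelicot Require Import Coquelicot.

Open Scope R_scope.

(** * Derivatives of (t^2 - 1)^n *)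

Lemma is_derive_Rplus (f g : R -> R) (x a b : R) :
  is_derive f x a -> is_derive g x b -> is_derive (fun t => f t + g t) x (a + b).
Proof. exact (is_derive_plus (K := R_AbsRing) (V := R_NormedModule) f g x a b). Qed.

Lemma is_derive_Rminus (f g : R -> R) (x a b : R) :
  is_derive f x a -> is_derive g x b -> is_derive (fun t => f t - g t) x (a - b).
Proof. exact (is_derive_minus (K := R_AbsRing) (V := R_NormedModule) f g x a b). Qed.

Lemma is_derive_Rconst (c x : R) : is_derive (fun _ => c) x 0.
Proof. exact (is_derive_const (K := R_AbsRing) (V := R_NormedModule) c x). Qed.

Lemma is_derive_Rid (x : R) : is_derive (fun t => t) x 1.
Proof. exact (is_derive_id (K := R_AbsRing) x). Qed.

Lemma is_derive_Req (f : R -> R) (x l l' : R) : is_derive f x l -> l = l' -> is_derive f x l'.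
Proof. now intros H <-. Qed.

Lemma is_derive_sq_sub1 (x : R) : is_derive (fun t => t ^ 2 - 1) x (2 * x).
Proof. auto_derive; [exact I | ring]. Qed.

(* The Leibniz rule for the j-th derivative of [(t^2 - 1) * (t^2 - 1)^n]. *)
Fixpoint rodrigues_D (n j : nat) (t : R) : R :=
  match n with
  | O => if Nat.eqb j 0 then 1 else 0
  | S n' => (t ^ 2 - 1) * rodrigues_D n' j t + 2 * INR j * t * rodrigues_D n' (j - 1) t
            + INR j * INR (j - 1) * rodrigues_D n' (j - 2) t
  end.

Lemma is_derive_leibniz_form (j : nat) (f g h : R -> R) (f' g' h' t : R) :
  is_derive f t f' -> is_derive g t g' -> is_derive h t h' ->
  is_derive (fun s => (s ^ 2 - 1) * f s + 2 * INR j * s * g s + INR j * INR (j - 1) * h s) t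
    (2 * t * f t + (t ^ 2 - 1) * f' + 2 * INR j * (g t + t * g') + INR j * INR (j - 1) * h').
Proof.
  intros Hf Hg Hh; eapply is_derive_Req.
  - apply is_derive_Rplus; [apply is_derive_Rplus|].
    + apply Derive.is_derive_mult; [apply is_derive_sq_sub1 | exact Hf].
    + apply Derive.is_derive_mult; [|exact Hg].
      apply (Derive.is_derive_mult (fun _ => 2 * INR j) (fun s => s));
        [apply is_derive_Rconst | apply is_derive_Rid].
    + apply Derive.is_derive_mult; [apply is_derive_Rconst | exact Hh].
  - cbv beta; ring.
Qed.

Lemma is_derive_rodrigues_D n j t : is_derive (rodrigues_D n j) t (rodrigues_D n (S j) t).
Proof.
  revert j t; induction n as [|n IH]; intros j t; cbn [rodrigues_D].
  - apply (is_derive_Req _ _ 0); [apply is_derive_Rconst | now destruct j].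
  - eapply is_derive_Req; [apply is_derive_leibniz_form; apply IH|].
    destruct j as [|[|j]]; [simpl; ring | simpl; ring |].
    replace (S (S j) - 1)%nat with (S j) by lia.
    replace (S (S j) - 2)%nat with j by lia.
    replace (S (S (S j)) - 1)%nat with (S (S j)) by lia.
    replace (S (S (S j)) - 2)%nat with (S j) by lia.
    rewrite !S_INR; simpl; ring.
Qed.

Lemma rodrigues_D_0 n t : rodrigues_D n 0 t = (t ^ 2 - 1) ^ n.
Proof. induction n as [|n IH]; simpl; [reflexivity|]. rewrite IH; simpl; ring. Qed.

Lemma Derive_n_rodrigues n j t : Derive_n (fun t => (t ^ 2 - 1) ^ n) j t = rodrigues_D n j t.
Proof.
  revert t; induction j as [|j IH]; intros t; simpl.
  - now rewrite rodrigues_D_0.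
  - rewrite (Derive_ext _ (rodrigues_D n j) _ IH).
    apply is_derive_unique, is_derive_rodrigues_D.
Qed.

Lemma rodrigues_D_overflow n j t : (2 * n < j)%nat -> rodrigues_D n j t = 0.
Proof.
  revert j; induction n as [|n IH]; intros j Hj; simpl.
  - destruct j; [lia | reflexivity].
  - rewrite !IH by lia; ring.
Qed.

Lemma derivative_towers_eq (A B : nat -> R -> R) :
  (forall j t, is_derive (A j) t (A (S j) t)) ->
  (forall j t, is_derive (B j) t (B (S j) t)) ->
  (forall t, A 0%nat t = B 0%nat t) -> forall j t, A j t = B j t.
Proof.
  intros HA HB H0 j; induction j as [|j IH]; intros t; [apply H0|].
  apply functional_extensionality in IH.
  pose proof (is_derive_unique _ _ _ (HA j t)) as hA.
  pose proof (is_derive_unique _ _ _ (HB j t)) as hB.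
  rewrite IH in hA; congruence.
Qed.

Lemma rodrigues_D_1 n t : (t ^ 2 - 1) * rodrigues_D n 1 t = 2 * INR n * t * rodrigues_D n 0 t.
Proof.
  induction n as [|n IH]; cbn [rodrigues_D]; [simpl; ring|].
  simpl (1 - 1)%nat; simpl (1 - 2)%nat.
  transitivity ((t ^ 2 - 1) * ((t ^ 2 - 1) * rodrigues_D n 1 t)
                + (t ^ 2 - 1) * 2 * t * rodrigues_D n 0 t); [simpl; ring|].
  rewrite IH, S_INR; simpl; ring.
Qed.

(* The j-th derivative of [(t^2 - 1) y' = 2 n t y], satisfied by [y = (t^2 - 1)^n]. *)
Lemma rodrigues_D_ode n j t :
  (t ^ 2 - 1) * rodrigues_D n (S j) t + 2 * INR j * t * rodrigues_D n j t
  + INR j * INR (j - 1) * rodrigues_D n (j - 1) t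
  = 2 * INR n * (t * rodrigues_D n j t + INR j * rodrigues_D n (j - 1) t).
Proof.
  revert j t; apply derivative_towers_eq with
    (A := fun j t => (t ^ 2 - 1) * rodrigues_D n (S j) t + 2 * INR j * t * rodrigues_D n j t
                     + INR j * INR (j - 1) * rodrigues_D n (j - 1) t)
    (B := fun j t => 2 * INR n * (t * rodrigues_D n j t + INR j * rodrigues_D n (j - 1) t)).
  - intros j t; eapply is_derive_Req; [apply is_derive_leibniz_form; apply is_derive_rodrigues_D|].
    destruct j as [|j]; [simpl; ring|].
    replace (S j - 1)%nat with j by lia; replace (S (S j) - 1)%nat with (S j) by lia.
    rewrite !S_INR; simpl; ring.
  - intros j t; eapply is_derive_Req.
    + apply is_derive_scal, is_derive_Rplus.
      * apply Derive.is_derive_mult; [apply is_derive_Rid | apply is_derive_rodrigues_D].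
      * apply Derive.is_derive_mult; [apply is_derive_Rconst | apply is_derive_rodrigues_D].
    + destruct j as [|j]; [simpl; ring|].
      replace (S j - 1)%nat with j by lia; replace (S (S j) - 1)%nat with (S j) by lia.
      rewrite !S_INR; ring.
  - intros t; simpl INR; rewrite rodrigues_D_1; ring.
Qed.

Lemma rodrigues_D_top n t :
  (t ^ 2 - 1) * rodrigues_D n (S n) t = INR n * INR (S n) * rodrigues_D n (n - 1) t.
Proof.
  pose proof (rodrigues_D_ode n n t) as H.
  destruct n as [|n]; [simpl; ring|].
  replace (S n - 1)%nat with n in * by lia.
  rewrite !S_INR in *; lra.
Qed.

(** * Spherical coordinates and the radial factors *)

Definition rho (w : vec3) : R := sqrt (vx w ^ 2 + vy w ^ 2).

Lemma vnorm_sq w : vnorm w * vnorm w = vx w ^ 2 + vy w ^ 2 + vz w ^ 2.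
Proof. unfold vnorm, vdot; rewrite sqrt_sqrt by nra; ring. Qed.

Lemma vnorm_eq0 w : vnorm w = 0 -> vx w = 0 /\ vy w = 0 /\ vz w = 0.
Proof. intros H; pose proof (vnorm_sq w) as E; rewrite H in E; repeat split; nra. Qed.

Section Spherical.

Variable w : vec3.
Hypothesis w_neq0 : vnorm w <> 0.

Let r := vnorm w.
Let mu := vz w / r.

Lemma r_cos_theta : r * mu = vz w.
Proof. unfold mu; field; exact w_neq0. Qed.

Lemma sin_theta_sq : sqrt (1 - mu ^ 2) * sqrt (1 - mu ^ 2) = 1 - mu ^ 2.
Proof.
  apply sqrt_sqrt.
  assert (0 < r) by (pose proof (sqrt_pos (vdot w w)); unfold r, vnorm in *; lra).
  pose proof (vnorm_sq w) as E; fold r in E.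
  replace (1 - mu ^ 2) with ((r * r - vz w ^ 2) / (r * r)) by (unfold mu; field; lra).
  rewrite E; apply Rle_mult_inv_pos; nra.
Qed.

Lemma r_sin_theta : r * sqrt (1 - mu ^ 2) = rho w.
Proof.
  symmetry; apply sqrt_lem_1; [nra | apply Rmult_le_pos; apply sqrt_pos |].
  pose proof sin_theta_sq as Hs; pose proof (vnorm_sq w) as E; fold r in E.
  pose proof r_cos_theta as Hm.
  transitivity (r * r * (sqrt (1 - mu ^ 2) * sqrt (1 - mu ^ 2))); [ring|].
  rewrite Hs; transitivity (r * r - (r * mu) ^ 2); [ring|].
  rewrite Hm, E; ring.
Qed.

End Spherical.

Definition solid_radial (w : vec3) (n a : nat) : R :=
  / INR (fact (n + a)) * vnorm w ^ n * legendreP n a (vz w / vnorm w).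

Lemma legendreP_rodrigues n a mu : legendreP n a mu =
  (-1) ^ a * sqrt (1 - mu ^ 2) ^ a / (2 ^ n * INR (fact n)) * rodrigues_D n (a + n) mu.
Proof. unfold legendreP; now rewrite Derive_n_rodrigues. Qed.

Lemma solid_radial_overflow w n a : (n < a)%nat -> solid_radial w n a = 0.
Proof.
  intros H; unfold solid_radial; rewrite legendreP_rodrigues, rodrigues_D_overflow by lia; ring.
Qed.

Lemma INR_fact_neq0 n : INR (fact n) <> 0.
Proof. apply not_0_INR, fact_neq_0. Qed.

Lemma solid_radial_succ_S w N a : vnorm w <> 0 ->
  INR (S N) * solid_radial w (S N) (S a)
  = rho w / 2 * (solid_radial w N (S (S a)) - solid_radial w N a)
    + vz w * solid_radial w N (S a).
Proof.
  intros Hr; unfold solid_radial; rewrite !legendreP_rodrigues.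
  rewrite <- (r_sin_theta w Hr).
  pose proof (sin_theta_sq w Hr) as Hs; pose proof (r_cos_theta w Hr) as Hm.
  set (r := vnorm w) in *; set (mu := vz w / r) in *; set (s := sqrt (1 - mu ^ 2)) in *.
  rewrite <- Hm.
  cbn [rodrigues_D].
  replace (S a + S N - 1)%nat with (S a + N)%nat by lia.
  replace (S a + S N - 2)%nat with (a + N)%nat by lia.
  replace (S a + S N)%nat with (S (S a) + N)%nat by lia.
  replace (mu ^ 2 - 1) with (- (s * s)) by lra.
  replace (S N + S a)%nat with (S (S (N + a))) by lia.
  replace (N + S (S a))%nat with (S (S (N + a))) by lia.
  replace (N + S a)%nat with (S (N + a)) by lia.
  replace (a + N)%nat with (N + a)%nat by lia.
  pose proof (INR_fact_neq0 (N + a)); pose proof (INR_fact_neq0 N).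
  pose proof (pos_INR N); pose proof (pos_INR a).
  cbn [fact pow]; rewrite !mult_INR, !S_INR, !plus_INR, ?S_INR; field.
  repeat split; try lra; apply pow_nonzero; lra.
Qed.

Lemma solid_radial_succ_O w N : vnorm w <> 0 ->
  INR (S N) * solid_radial w (S N) 0 = rho w * solid_radial w N 1 + vz w * solid_radial w N 0.
Proof.
  intros Hr; unfold solid_radial; rewrite !legendreP_rodrigues.
  rewrite <- (r_sin_theta w Hr).
  pose proof (sin_theta_sq w Hr) as Hs; pose proof (r_cos_theta w Hr) as Hm.
  set (r := vnorm w) in *; set (mu := vz w / r) in *; set (s := sqrt (1 - mu ^ 2)) in *.
  rewrite <- Hm.
  cbn [rodrigues_D].
  replace (0 + S N - 1)%nat with N by lia.
  replace (0 + S N - 2)%nat with (N - 1)%nat by lia.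
  replace (0 + S N)%nat with (S N) by lia.
  replace (1 + N)%nat with (S N) by lia.
  replace (INR (S N) * INR N * rodrigues_D N (N - 1) mu)
    with ((mu ^ 2 - 1) * rodrigues_D N (S N) mu) by (rewrite rodrigues_D_top; ring).
  replace (mu ^ 2 - 1) with (- (s * s)) by lra.
  replace (S N + 0)%nat with (S N) by lia.
  replace (N + 1)%nat with (S N) by lia.
  replace (N + 0)%nat with N by lia.
  replace (0 + N)%nat with N by lia.
  pose proof (INR_fact_neq0 N); pose proof (pos_INR N).
  cbn [fact pow]; rewrite !mult_INR, !S_INR; field.
  repeat split; try lra; apply pow_nonzero; lra.
Qed.

Open Scope C_scope.

(** * The ladder recurrence of the solid harmonics *)

Lemma Ceq_lincomb (x y k l r : C) : l = r -> x - y = k * (l - r) -> x = y.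
Proof. intros <- H; replace x with (x - y + y) by ring; rewrite H; ring. Qed.

Lemma Ci_sq : Ci * Ci = -1.
Proof. apply injective_projections; simpl; ring. Qed.

Lemma RtoC_sign_S N : RtoC ((-1) ^ S N) = - RtoC ((-1) ^ N).
Proof. apply injective_projections; simpl; ring. Qed.

Lemma eiphi_polar w : RtoC (rho w) * eiphi w = (vx w, vy w).
Proof.
  unfold eiphi, rho; cbv zeta.
  destruct (Req_EM_T (sqrt (vx w ^ 2 + vy w ^ 2)) 0) as [H|H].
  - rewrite H; apply sqrt_eq_0 in H; [|nra].
    assert (vx w = 0 /\ vy w = 0)%R as [-> ->] by (split; nra).
    apply injective_projections; simpl; ring.
  - apply injective_projections; simpl; field; exact H.
Qed.

Lemma eiphi_unit w : eiphi w * Cconj (eiphi w) = 1.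
Proof.
  unfold eiphi; cbv zeta.
  destruct (Req_EM_T (sqrt (vx w ^ 2 + vy w ^ 2)) 0) as [H|H].
  - apply injective_projections; simpl; ring.
  - pose proof (sqrt_sqrt (vx w ^ 2 + vy w ^ 2)) as Hq.
    set (q := sqrt (vx w ^ 2 + vy w ^ 2)) in *.
    apply injective_projections; simpl; [|ring].
    transitivity ((vx w ^ 2 + vy w ^ 2) / (q * q))%R; [field; exact H|].
    rewrite <- Hq by nra; field; exact H.
Qed.

Lemma xi_polar w : xi w = RtoC (rho w / 2) * eiphi w.
Proof.
  pose proof (eiphi_polar w) as H; destruct (eiphi w) as [e1 e2].
  injection H as H1 H2; unfold xi; apply injective_projections; simpl; lra.
Qed.

Lemma eta_polar w : eta w = RtoC (rho w / 2) * Cconj (eiphi w).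
Proof.
  pose proof (eiphi_polar w) as H; destruct (eiphi w) as [e1 e2].
  injection H as H1 H2; unfold eta; apply injective_projections; simpl; lra.
Qed.

Lemma eimphi_nonneg m w : (0 <= m)%Z -> eimphi m w = Cpow (eiphi w) (Z.abs_nat m).
Proof. intros H; unfold eimphi; destruct (Z.leb_spec 0 m); [reflexivity | lia]. Qed.

Lemma eimphi_nonpos m w : (m <= 0)%Z -> eimphi m w = Cpow (Cconj (eiphi w)) (Z.abs_nat m).
Proof.
  intros H; unfold eimphi; destruct (Z.leb_spec 0 m); [|reflexivity].
  now replace m with 0%Z by lia.
Qed.

Definition ladder (w : vec3) (F : Z -> C) (m : Z) : C :=
  Ci * xi w * F (m - 1)%Z + Ci * eta w * F (m + 1)%Z - RtoC (vz w) * F m.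

(* [solidR] without the cut-off at [|m| > n], where the Legendre factor vanishes anyway. *)
Definition solid_closed (n : nat) (m : Z) (w : vec3) : C :=
  RtoC ((-1) ^ n) * Cpow Ci (Z.abs_nat m) * RtoC (solid_radial w n (Z.abs_nat m)) * eimphi m w.

Lemma polar_ladder_step_S (N a : nat) (rh z X0 X1 X2 Xs : R) (e e' : C) :
  e' * e = 1 ->
  (INR (S N) * Xs = rh / 2 * (X2 - X0) + z * X1)%R ->
  RtoC (INR (S N)) * (RtoC ((-1) ^ S N) * Cpow Ci (S a) * RtoC Xs * Cpow e (S a)) =
  Ci * (RtoC (rh / 2) * e) * (RtoC ((-1) ^ N) * Cpow Ci a * RtoC X0 * Cpow e a)
  + Ci * (RtoC (rh / 2) * e') * (RtoC ((-1) ^ N) * Cpow Ci (S (S a)) * RtoC X2 * Cpow e (S (S a)))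
  - RtoC z * (RtoC ((-1) ^ N) * Cpow Ci (S a) * RtoC X1 * Cpow e (S a)).
Proof.
  intros He Hr.
  assert (Hc : RtoC (INR (S N)) * RtoC Xs
               = RtoC (rh / 2) * (RtoC X2 - RtoC X0) + RtoC z * RtoC X1)
    by now rewrite <- !RtoC_mult, <- RtoC_minus, <- RtoC_mult, <- RtoC_plus, Hr.
  assert (Hi : Cpow Ci (S (S a)) = - Cpow Ci a)
    by (cbn [Cpow]; rewrite Cmult_assoc, Ci_sq; ring).
  rewrite RtoC_sign_S, Hi; cbn [Cpow].
  set (Z := RtoC ((-1) ^ N)); set (P := Cpow Ci a); set (E := Cpow e a).
  apply (Ceq_lincomb _ _ (- Z * Ci * P * e * E) _ _ Hc),
        (Ceq_lincomb _ _ (Ci * RtoC (rh / 2) * Z * P * RtoC X2 * e * E) _ _ He).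
  ring.
Qed.

Lemma polar_ladder_step_O (N : nat) (rh z X0 X1 Xs : R) (e e' : C) :
  e * e' = 1 ->
  (INR (S N) * Xs = rh * X1 + z * X0)%R ->
  RtoC (INR (S N)) * (RtoC ((-1) ^ S N) * Cpow Ci 0 * RtoC Xs * Cpow e 0) =
  Ci * (RtoC (rh / 2) * e) * (RtoC ((-1) ^ N) * Cpow Ci 1 * RtoC X1 * Cpow e' 1)
  + Ci * (RtoC (rh / 2) * e') * (RtoC ((-1) ^ N) * Cpow Ci 1 * RtoC X1 * Cpow e 1)
  - RtoC z * (RtoC ((-1) ^ N) * Cpow Ci 0 * RtoC X0 * Cpow e 0).
Proof.
  intros He Hr.
  assert (Hc : RtoC (INR (S N)) * RtoC Xs = RtoC rh * RtoC X1 + RtoC z * RtoC X0)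
    by now rewrite <- !RtoC_mult, <- RtoC_plus, Hr.
  assert (Hh : RtoC (rh / 2) = RtoC rh / 2)
    by (apply injective_projections; simpl; field).
  rewrite RtoC_sign_S, Hh; cbn [Cpow].
  set (Z := RtoC ((-1) ^ N)).
  apply (Ceq_lincomb _ _ (- Z) _ _ Hc),
        (Ceq_lincomb _ _ (- Z * RtoC rh * RtoC X1 * Ci * Ci) _ _ He),
        (Ceq_lincomb _ _ (- Z * RtoC rh * RtoC X1) _ _ Ci_sq).
  field.
Qed.

Lemma solid_closed_origin N m w : vnorm w = 0%R -> solid_closed (S N) m w = 0.
Proof.
  intros H; unfold solid_closed, solid_radial; rewrite H, pow_i by lia.
  rewrite Rmult_0_r, Rmult_0_l; apply injective_projections; simpl; ring.
Qed.

Lemma ladder_solid_closed N m w :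
  RtoC (INR (S N)) * solid_closed (S N) m w = ladder w (fun m' => solid_closed N m' w) m.
Proof.
  destruct (Req_dec (vnorm w) 0) as [H0|Hr].
  { rewrite solid_closed_origin by exact H0.
    destruct (vnorm_eq0 w H0) as (hx & hy & hz).
    unfold ladder, xi, eta; rewrite hx, hy, hz.
    apply injective_projections; simpl; field. }
  unfold ladder, solid_closed; rewrite xi_polar, eta_polar.
  pose proof (eiphi_unit w) as HE; set (E := eiphi w) in *.
  destruct (Z.lt_trichotomy m 0) as [Hm|[->|Hm]].
  - (* For m < 0 the phases are powers of conj(e^{i phi}), so xi and eta trade roles. *)
    set (a := (Z.abs_nat m - 1)%nat).
    rewrite (eimphi_nonpos m), (eimphi_nonpos (m - 1)), (eimphi_nonpos (m + 1)) by lia; fold E.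
    replace (Z.abs_nat m) with (S a) by lia.
    replace (Z.abs_nat (m - 1)) with (S (S a)) by lia.
    replace (Z.abs_nat (m + 1)) with a by lia.
    rewrite (polar_ladder_step_S N a (rho w) (vz w) _ _ _ _ (Cconj E) E HE
               (solid_radial_succ_S w N a Hr)).
    ring.
  - rewrite (eimphi_nonpos (0 - 1)), (eimphi_nonneg (0 + 1)), (eimphi_nonneg 0) by lia; fold E.
    exact (polar_ladder_step_O N (rho w) (vz w) _ _ _ E (Cconj E) HE (solid_radial_succ_O w N Hr)).
  - set (a := (Z.abs_nat m - 1)%nat).
    rewrite (eimphi_nonneg m), (eimphi_nonneg (m - 1)), (eimphi_nonneg (m + 1)) by lia; fold E.
    replace (Z.abs_nat m) with (S a) by lia.
    replace (Z.abs_nat (m - 1)) with a by lia.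
    replace (Z.abs_nat (m + 1)) with (S (S a)) by lia.
    apply (polar_ladder_step_S N a (rho w) (vz w) _ _ _ _ E (Cconj E));
      [|apply solid_radial_succ_S, Hr].
    rewrite <- HE; ring.
Qed.

Lemma solidR_neg n m w : (n < 0)%Z -> solidR n m w = 0.
Proof. intros H; unfold solidR; destruct (Z.ltb_spec n 0); [reflexivity | lia]. Qed.

Lemma solidR_closed n m w : (0 <= n)%Z -> solidR n m w = solid_closed (Z.to_nat n) m w.
Proof.
  intros Hn; unfold solidR; destruct (Z.ltb_spec n 0) as [|_]; [lia|].
  destruct (Z.ltb_spec n (Z.abs m)) as [Hm|Hm]; [|reflexivity].
  unfold solid_closed; rewrite solid_radial_overflow by lia.
  apply injective_projections; simpl; ring.
Qed.

Lemma solidR_0 m w : solidR 0 m w = if Z.eqb m 0 then 1 else 0.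
Proof.
  rewrite solidR_closed by lia; unfold solid_closed.
  destruct (Z.eqb_spec m 0) as [->|Hm].
  - rewrite eimphi_nonneg by lia; unfold solid_radial.
    rewrite legendreP_rodrigues; apply injective_projections; simpl; field.
  - rewrite solid_radial_overflow by lia; apply injective_projections; simpl; ring.
Qed.

Lemma solidR_ladder n m w : (0 <= n)%Z ->
  RtoC (IZR n) * solidR n m w = ladder w (fun m' => solidR (n - 1) m' w) m.
Proof.
  intros Hn; destruct (Z_of_nat_complete n Hn) as [[|N] ->].
  - unfold ladder; rewrite !(solidR_neg (Z.of_nat 0 - 1)) by lia.
    apply injective_projections; simpl; ring.
  - rewrite <- INR_IZR_INZ, solidR_closed, Nat2Z.id, ladder_solid_closed by lia.
    unfold ladder.
    rewrite !solidR_closed by lia.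
    now replace (Z.to_nat (Z.of_nat (S N) - 1)) with N by lia.
Qed.

(** * Complex-valued functions of a real variable *)

Definition is_derive_RC (f : R -> C) (x : R) (l : C) : Prop :=
  is_derive (fun t => fst (f t)) x (fst l) /\ is_derive (fun t => snd (f t)) x (snd l).

Definition derivable_RC (f : R -> C) : Prop := forall x, exists l, is_derive_RC f x l.

Lemma is_derive_RC_eq f x l l' : is_derive_RC f x l -> l = l' -> is_derive_RC f x l'.
Proof. now intros H <-. Qed.

Lemma is_derive_RC_ext f g x l : (forall t, f t = g t) -> is_derive_RC f x l -> is_derive_RC g x l.
Proof.
  intros E [H1 H2]; split; eapply is_derive_ext; try exact H1; try exact H2;
    intros t; simpl; now rewrite E.
Qed.

Lemma is_derive_RC_const (c : C) x : is_derive_RC (fun _ => c) x 0.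
Proof. split; apply is_derive_Rconst. Qed.

Lemma is_derive_RC_RtoC (g : R -> R) x l :
  is_derive g x l -> is_derive_RC (fun t => RtoC (g t)) x (RtoC l).
Proof. intros H; split; simpl; [exact H | apply is_derive_Rconst]. Qed.

Lemma is_derive_RC_plus f g x a b :
  is_derive_RC f x a -> is_derive_RC g x b -> is_derive_RC (fun t => f t + g t) x (a + b).
Proof. intros [H1 H2] [H3 H4]; split; now apply is_derive_Rplus. Qed.

Lemma is_derive_RC_minus f g x a b :
  is_derive_RC f x a -> is_derive_RC g x b -> is_derive_RC (fun t => f t - g t) x (a - b).
Proof. intros [H1 H2] [H3 H4]; split; now apply is_derive_Rminus. Qed.

Lemma is_derive_RC_mult f g x a b : is_derive_RC f x a -> is_derive_RC g x b ->
  is_derive_RC (fun t => f t * g t) x (a * g x + f x * b).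
Proof.
  intros [H1 H2] [H3 H4]; split; eapply is_derive_Req.
  - apply is_derive_Rminus; apply Derive.is_derive_mult; eassumption.
  - simpl; ring.
  - apply is_derive_Rplus; apply Derive.is_derive_mult; eassumption.
  - simpl; ring.
Qed.

Lemma is_derive_RC_scal (k : C) f x a :
  is_derive_RC f x a -> is_derive_RC (fun t => k * f t) x (k * a).
Proof.
  intros H; eapply is_derive_RC_eq.
  - apply (is_derive_RC_mult (fun _ => k)); [apply is_derive_RC_const | exact H].
  - ring.
Qed.

Lemma derivable_RC_plus f g :
  derivable_RC f -> derivable_RC g -> derivable_RC (fun t => f t + g t).
Proof. intros Hf Hg x; destruct (Hf x), (Hg x); eexists; apply is_derive_RC_plus; eassumption. Qed.

Lemma derivable_RC_minus f g :
  derivable_RC f -> derivable_RC g -> derivable_RC (fun t => f t - g t).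
Proof. intros Hf Hg x; destruct (Hf x), (Hg x); eexists; apply is_derive_RC_minus; eassumption. Qed.

Lemma derivable_RC_mult f g :
  derivable_RC f -> derivable_RC g -> derivable_RC (fun t => f t * g t).
Proof. intros Hf Hg x; destruct (Hf x), (Hg x); eexists; apply is_derive_RC_mult; eassumption. Qed.

Lemma derivable_RC_scal k f : derivable_RC f -> derivable_RC (fun t => k * f t).
Proof. intros Hf x; destruct (Hf x); eexists; apply is_derive_RC_scal; eassumption. Qed.

Lemma derivable_RC_RtoC (g : R -> R) :
  (forall x, ex_derive g x) -> derivable_RC (fun t => RtoC (g t)).
Proof. intros Hg x; destruct (Hg x); eexists; apply is_derive_RC_RtoC; eassumption. Qed.

Lemma derivable_RC_continuous f : derivable_RC f -> forall x,
  continuous (fun t => fst (f t)) x /\ continuous (fun t => snd (f t)) x.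
Proof.
  intros Hf x; destruct (Hf x) as [l [H1 H2]].
  split; apply (ex_derive_continuous (K := R_AbsRing) (V := R_NormedModule)); eexists; eassumption.
Qed.

Notation is_RInt_C := (is_RInt (V := C_R_CompleteNormedModule)).
Notation RInt_C := (RInt (V := C_R_CompleteNormedModule)).

Lemma ex_RInt_derivable_RC f a b : derivable_RC f -> ex_RInt (V := C_R_CompleteNormedModule) f a b.
Proof.
  intros Hf; apply (ex_RInt_fct_extend_pair (U := R_NormedModule) (V := R_NormedModule));
    apply (ex_RInt_continuous (V := R_CompleteNormedModule)); intros x _;
    apply (derivable_RC_continuous f Hf).
Qed.

Lemma is_RInt_derive_RC (F f : R -> C) a b :
  (forall x, is_derive_RC F x (f x)) -> derivable_RC f -> is_RInt_C f a b (F b - F a).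
Proof.
  intros HF Hf.
  replace (F b - F a) with ((minus (fst (F b)) (fst (F a)), minus (snd (F b)) (snd (F a))) : C)
    by (apply injective_projections; simpl; unfold minus, plus, opp; simpl; ring).
  apply (is_RInt_fct_extend_pair (U := R_NormedModule) (V := R_NormedModule)).
  - apply (is_RInt_derive (V := R_CompleteNormedModule) (fun t => fst (F t))); intros x _;
      [apply HF | apply (derivable_RC_continuous f Hf)].
  - apply (is_RInt_derive (V := R_CompleteNormedModule) (fun t => snd (F t))); intros x _;
      [apply HF | apply (derivable_RC_continuous f Hf)].
Qed.

Lemma is_RInt_Cplus f g a b If Ig :
  is_RInt_C f a b If -> is_RInt_C g a b Ig -> is_RInt_C (fun x => f x + g x) a b (If + Ig).
Proof. exact (is_RInt_plus (V := C_R_CompleteNormedModule) f g a b If Ig). Qed.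

Lemma is_RInt_Cminus f g a b If Ig :
  is_RInt_C f a b If -> is_RInt_C g a b Ig -> is_RInt_C (fun x => f x - g x) a b (If - Ig).
Proof. exact (is_RInt_minus (V := C_R_CompleteNormedModule) f g a b If Ig). Qed.

Lemma is_RInt_Cmult_l (k : C) f a b If :
  is_RInt_C f a b If -> is_RInt_C (fun x => k * f x) a b (k * If).
Proof.
  intros H.
  pose proof (is_RInt_fct_extend_fst (U := R_NormedModule) (V := R_NormedModule) f a b If H) as H1.
  pose proof (is_RInt_fct_extend_snd (U := R_NormedModule) (V := R_NormedModule) f a b If H) as H2.
  replace (k * If) with ((minus (scal (fst k) (fst If)) (scal (snd k) (snd If)),
                          plus (scal (fst k) (snd If)) (scal (snd k) (fst If))) : C)
    by (apply injective_projections; simpl; unfold minus, plus, opp, scal; simpl;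
        unfold mult; simpl; ring).
  apply (is_RInt_fct_extend_pair (U := R_NormedModule) (V := R_NormedModule)).
  - eapply is_RInt_ext; [|exact (is_RInt_minus (V := R_NormedModule) _ _ a b _ _
                                   (is_RInt_scal _ a b (fst k) _ H1)
                                   (is_RInt_scal _ a b (snd k) _ H2))].
    intros x _; simpl; unfold minus, plus, opp, scal; simpl; unfold mult; simpl; ring.
  - eapply is_RInt_ext; [|exact (is_RInt_plus (V := R_NormedModule) _ _ a b _ _
                                   (is_RInt_scal _ a b (fst k) _ H2)
                                   (is_RInt_scal _ a b (snd k) _ H1))].
    intros x _; simpl; unfold minus, plus, opp, scal; simpl; unfold mult; simpl; ring.
Qed.

(** * Solid harmonics along a line *)

Lemma ladder_ext v F G m : (forall m', F m' = G m') -> ladder v F m = ladder v G m.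
Proof. intros H; unfold ladder; now rewrite !H. Qed.

Lemma ladder_scal v (k : C) F m : ladder v (fun m' => k * F m') m = k * ladder v F m.
Proof. unfold ladder; ring. Qed.

Lemma ladder_comm v w F m :
  ladder v (fun m' => ladder w F m') m = ladder w (fun m' => ladder v F m') m.
Proof.
  unfold ladder; replace (m - 1 + 1)%Z with m by ring; replace (m + 1 - 1)%Z with m by ring.
  ring.
Qed.

Definition line (p d : vec3) (t : R) : vec3 := vadd p (vscal t d).

Lemma ladder_line p d t F m : ladder (line p d t) F m = ladder p F m + RtoC t * ladder d F m.
Proof.
  assert (Hxi : xi (line p d t) = xi p + RtoC t * xi d)
    by (apply injective_projections; simpl; field).
  assert (Heta : eta (line p d t) = eta p + RtoC t * eta d)
    by (apply injective_projections; simpl; field).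
  assert (Hz : RtoC (vz (line p d t)) = RtoC (vz p) + RtoC t * RtoC (vz d))
    by (apply injective_projections; simpl; ring).
  unfold ladder; rewrite Hxi, Heta, Hz; ring.
Qed.

Lemma is_derive_RC_ladder v (G : R -> Z -> C) (G' : Z -> C) x m :
  (forall m', is_derive_RC (fun t => G t m') x (G' m')) ->
  is_derive_RC (fun t => ladder v (G t) m) x (ladder v G' m).
Proof.
  intros H; unfold ladder.
  apply is_derive_RC_minus; [apply is_derive_RC_plus|]; apply is_derive_RC_scal, H.
Qed.

Lemma derivable_RC_ladder v (G : R -> Z -> C) m :
  (forall m', derivable_RC (fun t => G t m')) -> derivable_RC (fun t => ladder v (G t) m).
Proof.
  intros H; unfold ladder.
  apply derivable_RC_minus; [apply derivable_RC_plus|]; apply derivable_RC_scal, H.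
Qed.

Lemma is_RInt_ladder v (G : R -> Z -> C) (I : Z -> C) a b m :
  (forall m', is_RInt_C (fun t => G t m') a b (I m')) ->
  is_RInt_C (fun t => ladder v (G t) m) a b (ladder v I m).
Proof.
  intros H; unfold ladder.
  apply is_RInt_Cminus; [apply is_RInt_Cplus|]; apply is_RInt_Cmult_l, H.
Qed.

Section Line.

Variables p d : vec3.

Lemma is_derive_RC_ladder_line (G : R -> Z -> C) (G' : Z -> C) x m :
  (forall m', is_derive_RC (fun t => G t m') x (G' m')) ->
  is_derive_RC (fun t => ladder (line p d t) (G t) m) x
    (ladder (line p d x) G' m + ladder d (G x) m).
Proof.
  intros H.
  apply (is_derive_RC_ext (fun t => ladder p (G t) m + RtoC t * ladder d (G t) m));
    [intros t; now rewrite ladder_line|].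
  eapply is_derive_RC_eq.
  - apply is_derive_RC_plus; [apply is_derive_RC_ladder, H|].
    apply is_derive_RC_mult;
      [apply is_derive_RC_RtoC, is_derive_Rid | apply is_derive_RC_ladder, H].
  - rewrite ladder_line; ring.
Qed.

(* Inductively, d/dt R_{N+1} = (ladder d R_N + ladder (p + t d) (ladder d R_{N-1})) / (N+1),
   and commuting the two ladders turns the second term into N ladder d R_N. *)
Lemma is_derive_RC_solidR_line n m x : (0 <= n)%Z ->
  is_derive_RC (fun t => solidR n m (line p d t)) x
    (ladder d (fun m' => solidR (n - 1) m' (line p d x)) m).
Proof.
  intros Hn; destruct (Z_of_nat_complete n Hn) as [N ->]; clear Hn.
  revert m x; induction N as [|N IH]; intros m x.
  - eapply is_derive_RC_ext; [intros t; symmetry; apply solidR_0|].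
    eapply is_derive_RC_eq; [apply is_derive_RC_const|].
    unfold ladder; rewrite !(solidR_neg (Z.of_nat 0 - 1)) by lia; ring.
  - assert (HS : RtoC (INR (S N)) <> 0)
      by (intros E; injection E as E; exact (not_0_INR (S N) (Nat.neq_succ_0 N) E)).
    apply (is_derive_RC_ext (fun t => / RtoC (INR (S N))
             * ladder (line p d t) (fun m' => solidR (Z.of_nat N) m' (line p d t)) m)).
    { intros t; pose proof (solidR_ladder (Z.of_nat (S N)) m (line p d t)) as E.
      replace (Z.of_nat (S N) - 1)%Z with (Z.of_nat N) in E by lia.
      rewrite <- E, <- INR_IZR_INZ by lia; field; exact HS. }
    eapply is_derive_RC_eq;
      [apply is_derive_RC_scal, is_derive_RC_ladder_line; intros m'; apply IH|].
    rewrite ladder_comm.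
    rewrite (ladder_ext d _ (fun m' => RtoC (INR N) * solidR (Z.of_nat N) m' (line p d x)))
      by (intros m'; rewrite INR_IZR_INZ; symmetry; apply solidR_ladder; lia).
    rewrite ladder_scal.
    replace (Z.of_nat (S N) - 1)%Z with (Z.of_nat N) by lia.
    rewrite S_INR, RtoC_plus in *; field; exact HS.
Qed.

Lemma derivable_RC_solidR_line n m : derivable_RC (fun t => solidR n m (line p d t)).
Proof.
  intros x; destruct (Z_lt_le_dec n 0) as [H|H].
  - exists 0; eapply is_derive_RC_ext; [intros t; symmetry; apply (solidR_neg n m _ H)|].
    apply is_derive_RC_const.
  - eexists; apply is_derive_RC_solidR_line, H.
Qed.

End Line.

(** * The integral recurrence *)

Lemma is_derive_beta_poly (b c : nat) u :
  is_derive (fun t => t ^ S b * (1 - t) ^ c)%R u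
    (INR (S b + c) * u ^ b * (1 - u) ^ c - INR c * u ^ b * (1 - u) ^ (c - 1))%R.
Proof.
  eapply is_derive_Req.
  - apply (Derive.is_derive_mult (fun t => t ^ S b) (fun t => (1 - t) ^ c))%R.
    + apply (is_derive_pow (fun t => t) (S b) u 1), is_derive_Rid.
    + apply (is_derive_pow (fun t => 1 - t) c u (0 - 1))%R, is_derive_Rminus;
        [apply is_derive_Rconst | apply is_derive_Rid].
  - rewrite plus_INR; destruct c as [|c]; cbn [pred pow]; [simpl INR; ring|].
    replace (S c - 1)%nat with c by lia; ring.
Qed.

Section Moments.

Variables p d : vec3.

(* With [p = v_1 + r_v] and [d = r_u - r_v] this is the paper's [Q_{n,b}^{m,c}(u, 1 - u)]. *)
Definition Qline (n m : Z) (b c : nat) (u : R) : C :=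
  RtoC (u ^ b * (1 - u) ^ c) * solidR n m (line p d u).

Lemma derivable_RC_Qline n m b c : derivable_RC (Qline n m b c).
Proof.
  apply derivable_RC_mult; [|apply derivable_RC_solidR_line].
  apply derivable_RC_RtoC; intros u; auto_derive; exact I.
Qed.

(* The recurrence [n R_n = ladder (p + u d) R_{n-1} = ladder p R_{n-1} + u ladder d R_{n-1}]
   trades the derivative along the line for [n R_n] and the ladder at [p]. *)
Lemma is_derive_RC_Qline_S n m b c u : (0 <= n)%Z ->
  is_derive_RC (Qline n m (S b) c) u
    (RtoC (IZR n + INR b + INR c + 1) * Qline n m b c u
     - RtoC (INR c) * Qline n m b (c - 1) u
     - ladder p (fun m' => Qline (n - 1) m' b c u) m).
Proof.
  intros Hn; eapply is_derive_RC_eq.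
  - apply (is_derive_RC_mult (fun t => RtoC (t ^ S b * (1 - t) ^ c)%R)).
    + apply is_derive_RC_RtoC, is_derive_beta_poly.
    + apply is_derive_RC_solidR_line, Hn.
  - pose proof (solidR_ladder n m (line p d u) Hn) as Hrec; rewrite ladder_line in Hrec.
    unfold Qline; rewrite ladder_scal.
    apply (Ceq_lincomb _ _ (- RtoC (u ^ b * (1 - u) ^ c)%R) _ _ Hrec).
    set (S0 := solidR n m (line p d u)) in *.
    set (Lp := ladder p _ m) in *; set (Ld := ladder d _ m) in *.
    replace (u ^ S b * (1 - u) ^ c)%R with (u * (u ^ b * (1 - u) ^ c))%R by (simpl; ring).
    set (P := (u ^ b * (1 - u) ^ c)%R); set (P1 := (u ^ b * (1 - u) ^ (c - 1))%R).
    replace (INR (S b + c) * u ^ b * (1 - u) ^ c - INR c * u ^ b * (1 - u) ^ (c - 1))%R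
      with ((INR b + 1 + INR c) * P - INR c * P1)%R
      by (unfold P, P1; rewrite plus_INR, S_INR; ring).
    rewrite RtoC_minus, !RtoC_mult, !RtoC_plus; ring.
Qed.

Lemma RInt_Qline_recurrence n m b c : (0 <= n)%Z ->
  RtoC (IZR n + INR b + INR c + 1) * RInt_C (Qline n m b c) 0 1
  - RtoC (INR c) * RInt_C (Qline n m b (c - 1)) 0 1
  - ladder p (fun m' => RInt_C (Qline (n - 1) m' b c) 0 1) m
  = Qline n m (S b) c 1 - Qline n m (S b) c 0.
Proof.
  intros Hn.
  assert (HQ : forall n' m' b' c',
             is_RInt_C (Qline n' m' b' c') 0 1 (RInt_C (Qline n' m' b' c') 0 1))
    by (intros; apply (RInt_correct (V := C_R_CompleteNormedModule)), ex_RInt_derivable_RC,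
          derivable_RC_Qline).
  set (g := fun u => RtoC (IZR n + INR b + INR c + 1) * Qline n m b c u
                     - RtoC (INR c) * Qline n m b (c - 1) u
                     - ladder p (fun m' => Qline (n - 1) m' b c u) m).
  assert (Hg : derivable_RC g).
  { apply derivable_RC_minus; [apply derivable_RC_minus|].
    - apply derivable_RC_scal, derivable_RC_Qline.
    - apply derivable_RC_scal, derivable_RC_Qline.
    - apply derivable_RC_ladder; intros m'; apply derivable_RC_Qline. }
  assert (Hint : is_RInt_C g 0 1
    (RtoC (IZR n + INR b + INR c + 1) * RInt_C (Qline n m b c) 0 1
     - RtoC (INR c) * RInt_C (Qline n m b (c - 1)) 0 1
     - ladder p (fun m' => RInt_C (Qline (n - 1) m' b c) 0 1) m)).
  { apply is_RInt_Cminus; [apply is_RInt_Cminus|].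
    - apply is_RInt_Cmult_l, HQ.
    - apply is_RInt_Cmult_l, HQ.
    - apply is_RInt_ladder; intros m'; apply HQ. }
  rewrite <- (is_RInt_unique _ _ _ _ Hint).
  apply (is_RInt_unique (V := C_R_CompleteNormedModule)), is_RInt_derive_RC;
    [intros u; apply is_derive_RC_Qline_S, Hn | exact Hg].
Qed.

End Moments.

Lemma rq_line v1 ru rv u :
  rq v1 ru rv u (1 - u) = line (vadd v1 rv) (vadd ru (vscal (-1) rv)) u.
Proof. unfold rq, line, vadd, vscal; simpl; f_equal; ring. Qed.

Lemma jint_Qline v1 ru rv n m b c :
  jint v1 ru rv n m b c = RInt_C (Qline (vadd v1 rv) (vadd ru (vscal (-1) rv)) n m b c) 0 1.
Proof.
  unfold jint; apply (RInt_ext (V := C_R_CompleteNormedModule)); intros u _.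
  unfold Qf, Qline; rewrite rq_line; apply Cmult_comm.
Qed.

Lemma qval_Qline v1 ru rv n m b c :
  qval v1 ru rv n m b c = Qline (vadd v1 rv) (vadd ru (vscal (-1) rv)) n m (S b) c 1
                          - Qline (vadd v1 rv) (vadd ru (vscal (-1) rv)) n m (S b) c 0.
Proof.
  unfold qval, Qf, Qline; rewrite <- (Rminus_diag 1), rq_line, Rminus_diag, Rminus_0_r.
  rewrite !pow1, (pow_i (S b)) by lia.
  rewrite Rmult_0_l; ring.
Qed.

Lemma jint_recurrence v1 ru rv n m b c : (0 <= n)%Z ->
  RtoC (IZR n + INR b + INR c + 1) * jint v1 ru rv n m b c
  - RtoC (INR c) * jint v1 ru rv n m b (c - 1)
  - ladder (vadd v1 rv) (fun m' => jint v1 ru rv (n - 1) m' b c) m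
  = qval v1 ru rv n m b c.
Proof.
  intros Hn; rewrite qval_Qline, <- RInt_Qline_recurrence by exact Hn.
  rewrite !jint_Qline; f_equal; apply ladder_ext; intros m'; apply jint_Qline.
Qed.

Lemma alpha_beta_combination Ainv v1 rv s :
  (xi v1 + xi rv) * alphaM Ainv s + (eta v1 + eta rv) * alphaP Ainv s
  + RtoC (vz v1 + vz rv) * RtoC (Ainv s 3%nat) - RtoC (beta Ainv v1 s)
  = RtoC (Ainv s 1%nat * vx rv + Ainv s 2%nat * vy rv + Ainv s 3%nat * vz rv).
Proof. unfold xi, eta, alphaM, alphaP, beta; apply injective_projections; simpl; field. Qed.

Lemma xi_vadd a b : xi (vadd a b) = xi a + xi b.
Proof. apply injective_projections; simpl; field. Qed.

Lemma eta_vadd a b : eta (vadd a b) = eta a + eta b.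
Proof. apply injective_projections; simpl; field. Qed.

Theorem lemma2 (v1 ru rv : vec3) (Ainv : nat -> nat -> R)
  (Hind : lin_indep2 ru rv)
  (Hinv : is_inverse3 (Amat ru rv) Ainv)
  (n m : Z) (b c : nat)
  (Hn : (0 <= n)%Z) (Hm : (Z.abs m <= n)%Z) :
  let j := jint v1 ru rv in
  let bb := RtoC (INR b) in
  let cc := RtoC (INR c) in
  RtoC (IZR n + INR b + INR c + 1) * j n m b c =
    (xi v1 + xi rv) *
      (Ci * j (n - 1)%Z (m - 1)%Z b c
       + bb * alphaM Ainv 1%nat * j n m (b - 1)%nat c
       + cc * alphaM Ainv 2%nat * j n m b (c - 1)%nat)
  + (eta v1 + eta rv) *
      (Ci * j (n - 1)%Z (m + 1)%Z b c
       + bb * alphaP Ainv 1%nat * j n m (b - 1)%nat c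
       + cc * alphaP Ainv 2%nat * j n m b (c - 1)%nat)
  + RtoC (vz v1 + vz rv) *
      (- j (n - 1)%Z m b c
       + bb * RtoC (Ainv 1%nat 3%nat) * j n m (b - 1)%nat c
       + cc * RtoC (Ainv 2%nat 3%nat) * j n m b (c - 1)%nat)
  - bb * RtoC (beta Ainv v1 1%nat) * j n m (b - 1)%nat c
  - cc * RtoC (beta Ainv v1 2%nat) * j n m b (c - 1)%nat
  + qval v1 ru rv n m b c.
Proof.
  intros j bb cc.
  assert (Hrow1 := proj1 (Hinv 1%nat 2%nat ltac:(lia) ltac:(lia))).
  assert (Hrow2 := proj1 (Hinv 2%nat 2%nat ltac:(lia) ltac:(lia))).
  unfold delta in Hrow1, Hrow2; simpl in Hrow1, Hrow2.
  pose proof (alpha_beta_combination Ainv v1 rv 1) as Hb.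
  pose proof (alpha_beta_combination Ainv v1 rv 2) as Hc.
  rewrite Hrow1 in Hb; rewrite Hrow2 in Hc.
  pose proof (jint_recurrence v1 ru rv n m b c Hn) as Hrec; unfold ladder in Hrec.
  rewrite xi_vadd, eta_vadd in Hrec; cbn [vz vadd] in Hrec.
  apply (Ceq_lincomb _ _ 1 _ _ Hrec), (Ceq_lincomb _ _ (- bb * j n m (b - 1)%nat c) _ _ Hb),
        (Ceq_lincomb _ _ (- cc * j n m b (c - 1)%nat) _ _ Hc).
  unfold j, bb, cc; ring.
Qed.
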